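(* Suppose $r=2r_1$ is even and put $t=s_1(s_2s_3)^{r_1}\in G$. (1) If $t^2(s_2t^2s_2)=(s_2t^2s_2)t^2$ in $G$, then one of the following holds: (a) $\Delta=0$; (b) $\alpha=1$ (so $p=3$) and $\Delta=4-\gamma$; (c) $\alpha=2$, $\beta=1$, $\gamma=2$, $l=-1$, $m=-2$ (so $p=r=4$, $q=3$), and $G$ is isomorphic to the Coxeter group $W(B_3)$. (2) If $t^2(s_3t^2s_3)=(s_3t^2s_3)t^2$ in $G$, then one of the following holds: (a) $\Delta=0$; (b) $\beta=1$ (so $q=3$) and $\Delta=4-\gamma$; (c) $\alpha=1$, $\beta=2$, $\gamma=2$, $l=-2$, $m=-1$ (so $q=r=4$, $p=3$), and $G$ is isomorphic to $W(B_3)$.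
   Context: Setting. Let $p,q,r\ge 3$ be integers and $W=W(p,q,r)$ the Coxeter group with generators $s_1,s_2,s_3$ and relations $s_i^2=1$, $(s_1s_2)^p=(s_1s_3)^q=(s_2s_3)^r=1$. Let $\alpha=4\cos^2(\pi k_1/p)$, $\beta=4\cos^2(\pi k_2/q)$, $\gamma=4\cos^2(\pi k_3/r)$ with $\gcd(k_1,p)=\gcd(k_2,q)=\gcd(k_3,r)=1$ (so $0<\alpha,\beta,\gamma<4$), and let $l,m\in\mathbb{C}$ with $lm=\gamma$. Let $K\subset\mathbb{C}$ be a field containing $\alpha,\beta,\gamma,l,m$, and $M$ a $3$-dimensional $K$-vector space with basis $(a_1,a_2,a_3)$. The reflection representation $R:W\to GL(M)$ with parameters $(\alpha,\beta,\gamma;l,m)$ is defined by: for $x=\lambda_1a_1+\lambda_2a_2+\lambda_3a_3$, $R(s_1)x=x-(2\lambda_1-\alpha\lambda_2-\beta\lambda_3)a_1$, $R(s_2)x=x-(-\lambda_1+2\lambda_2-l\lambda_3)a_2$, $R(s_3)x=x-(-\lambda_1-m\lambda_2+2\lambda_3)a_3$. Put $G=R(W)$ and write $s_i$ for $R(s_i)$. Let $\Delta=8-2\alpha-2\beta-2\gamma-(\alpha l+\beta m)$; $R$ is reducible iff $\Delta=0$. *)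

From HB Require Import structures.
From mathcomp Require Import all_boot all_order all_algebra all_fingroup.
Set Implicit Arguments. Unset Strict Implicit. Unset Printing Implicit Defensive.
Import GRing.Theory Num.Theory.
Local Open Scope ring_scope.

(* 4 cos^2 (pi k / p) with gcd(k,p)=1 is exactly 2 + z + z^-1 for z a
   primitive p-th root of unity (z = exp(2 pi i k / p)). *)
Definition fourcos2 (K : numClosedFieldType) (z : K) : K := 2 + z + z^-1.

(* Matrix of R(s_i) in the basis (a_1,a_2,a_3), acting on coordinate
   column vectors: R(s_i) = 1 - e_i * c_i, where c_i is the row of
   coefficients of the linear form defining R(s_i). *)
Definition refl_row (K : numClosedFieldType) (al be l m : K) (i : 'I_3) : 'rV[K]_3 :=
  match val i with
  | 0%N => \row_(j < 3) [:: 2; - al; - be]`_j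
  | 1%N => \row_(j < 3) [:: -1; 2; - l]`_j
  | _ => \row_(j < 3) [:: -1; - m; 2]`_j
  end.

Definition reflR (K : numClosedFieldType) (al be l m : K) (i : 'I_3) : 'M[K]_3 :=
  \matrix_(a < 3, b < 3) ((a == b)%:R - (a == i)%:R * refl_row al be l m i 0 b).

Definition s1 {K : numClosedFieldType} (al be l m : K) := reflR al be l m 0.
Definition s2 {K : numClosedFieldType} (al be l m : K) := reflR al be l m 1.
Definition s3 {K : numClosedFieldType} (al be l m : K) := reflR al be l m 2.

(* G = R(W): the subgroup of GL(M) generated by the three reflections
   (each is an involution, so the generated monoid is the group). *)
Inductive inG (K : numClosedFieldType) (al be l m : K) : 'M[K]_3 -> Prop :=
  | inG1 : inG al be l m 1
  | inGmul (i : 'I_3) (x : 'M[K]_3) : inG al be l m x -> inG al be l m (reflR al be l m i * x).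

Definition Delta (K : numClosedFieldType) (al be ga l m : K) : K :=
  8 - 2 * al - 2 * be - 2 * ga - (al * l + be * m).

(* W(B_3) realised as the hyperoctahedral group of signed permutations of
   {1,2,3}: permutations of 'I_3 * bool commuting with the sign flip. *)
Definition flip3 (x : 'I_3 * bool) : 'I_3 * bool := (x.1, ~~ x.2).
Definition WB3 : {set {perm ('I_3 * bool)}} :=
  [set s : {perm ('I_3 * bool)} | [forall x, s (flip3 x) == flip3 (s x)]].

Definition isom_WB3 (K : numClosedFieldType) (G : 'M[K]_3 -> Prop) : Prop :=
  exists f : 'M[K]_3 -> {perm ('I_3 * bool)},
    [/\ (forall x y, G x -> G y -> f (x * y) = (f x * f y)%g),
        (forall x y, G x -> G y -> f x = f y -> x = y) &
        (forall g, g \in WB3 <-> exists2 x, G x & f x = g)].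

From HB Require Import structures.
From mathcomp Require Import all_boot all_order all_algebra all_fingroup.
From mathcomp Require Import ring zify.
Set Implicit Arguments. Unset Strict Implicit. Unset Printing Implicit Defensive.
Import GRing.Theory Num.Theory.
Local Open Scope ring_scope.

(* In coordinates, [s2 s3] has the distinct eigenvalues 1, z3, z3^-1, so
   [(s2 s3)^r1] is the polynomial in [s2 s3] interpolating 1, -1, -1 there: a
   half-turn W, which makes [t = s1 W] explicit.  Three entries of the
   commutator of [t^2] and [s2 t^2 s2] factor and leave three cases:
   Delta = 0, or alpha = 1 and Delta = 4 - gamma, or m = -2 and
   alpha l + 2 beta = 0.  In the last case alpha gamma = 4 beta; since
   [4 cos^2 (pi k / n) = (1 + z)^2 / z], comparing 2-adic valuations of
   algebraic integers [1 - w] for roots of unity [w] forces z1^2 = z3^2 = -1,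
   hence (alpha, beta, gamma, l, m) = (2, 1, 2, -1, -2).  For these values G
   permutes six vectors [+-u_i] faithfully, which identifies it with the
   signed permutation group W(B3).  Part (2) is part (1) conjugated by the
   exchange of a2 and a3. *)

Section IntegralRootsOfUnity.
Variable K : numClosedFieldType.
Local Notation Zint := (integralOver (intr : int -> K)).

Lemma half_not_integral : ~ Zint 2^-1.
Proof.
case=> p mon_p /rootP; set n := (size p).-1.
have sz_p : size p = n.+1 by rewrite prednK // lt0n size_poly_eq0 monic_neq0.
have lead_p : p`_n = 1 by rewrite -(monicP mon_p) lead_coefE.
pose k : int := \sum_(i < n) p`_i * 2 ^+ (n.-1 - i).
have two_n : 2 ^+ n * (map_poly intr p).[2^-1] = (1 + 2 * k)%:~R :> K.
  rewrite horner_coef size_map_inj_poly ?sz_p //; last exact: intr_inj.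
  rewrite big_ord_recr /= coef_map lead_p mulrDr mulr_sumr rmorphD rmorphM rmorph_sum /=.
  rewrite addrC mul1r exprVn mulfV ?expf_neq0 ?pnatr_eq0 //; congr (_ + _).
  rewrite mulr_sumr; apply: eq_bigr => i _; rewrite coef_map rmorphM rmorphXn /=.
  have i_lt_n := ltn_ord i.
  rewrite exprVn mulrCA -expfB // -pmulrn (_ : n - i = (n.-1 - i).+1)%N; last lia.
  by rewrite exprS; ring.
move=> p_half; move/eqP: two_n; rewrite p_half mulr0 eq_sym intr_eq0; lia.
Qed.

Lemma odd_neq_2mul (c : nat) (x : K) : odd c -> Zint x -> c%:R != 2 * x.
Proof.
move=> odd_c Zx; apply/eqP => c_2x; apply: half_not_integral.
have -> : 2^-1 = x - (c./2)%:R :> K.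
  have two_neq0 : (2 : K) != 0 by rewrite pnatr_eq0.
  apply: (mulfI two_neq0); rewrite mulfV // mulrBr -c_2x.
  rewrite -{1}(odd_double_half c) odd_c -muln2 natrD natrM /=; ring.
by apply: integral_sub => //; apply: integral_nat.
Qed.

Lemma odd_neq_pow2_mul (c k : nat) (x : K) :
  odd c -> (0 < k)%N -> Zint x -> c%:R != 2 ^+ k * x.
Proof.
case: k => // k odd_c _ Zx; rewrite exprS -mulrA; apply: odd_neq_2mul => //.
by apply: integral_mul Zx; rewrite -natrX; apply: integral_nat.
Qed.

Lemma unity_root_integral (w : K) n : (0 < n)%N -> w ^+ n = 1 -> Zint w.
Proof.
move=> n_gt0 wn1; exists ('X^n - 1); first exact: monicXnsubC.
by rewrite rmorphB /= map_polyXn rmorph1 /root !hornerE wn1 subrr.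
Qed.

Lemma integral_expr (x : K) k : Zint x -> Zint (x ^+ k).
Proof.
by move=> Zx; elim: k => [|k IHk]; [apply: integral1 | rewrite exprS; apply: integral_mul].
Qed.

Lemma integral_sum I (r : seq I) (P : pred I) (F : I -> K) :
  (forall i, P i -> Zint (F i)) -> Zint (\sum_(i <- r | P i) F i).
Proof. by move=> ZF; elim/big_ind: _ => //; [apply: integral0 | apply: integral_add]. Qed.

(* [two_adic_le x a b]: [x ^+ a] divides [2 ^+ b] times an odd integer, which
   says that the 2-adic valuation of [x] is at most [b / a] times that of 2. *)
Definition two_adic_le (x : K) (a b : nat) : Prop :=
  exists2 U, Zint U & exists2 c, odd c & x ^+ a * U = 2 ^+ b * c%:R.

Lemma geometric_sum (x : K) n : (1 - x) * \sum_(i < n) x ^+ i = 1 - x ^+ n.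
Proof. by rewrite -opprB mulNr -subrX1 opprB. Qed.

Lemma two_adic_one_sub_unity_root_odd (w : K) j o :
  odd o -> w ^+ (2 ^ j * o) = 1 -> w ^+ (2 ^ j) != 1 -> Zint w ->
  two_adic_le (1 - w) 1 0.
Proof.
move=> odd_o wn1 v_neq1 Zw; set v := w ^+ (2 ^ j) in v_neq1.
have vo1 : v ^+ o = 1 by rewrite -exprM.
have sum_v : \sum_(k < o) v ^+ k = 0.
  apply/eqP; have := geometric_sum v o; rewrite vo1 subrr => /eqP.
  by rewrite mulf_eq0 subr_eq0 eq_sym (negbTE v_neq1).
exists ((\sum_(i < 2 ^ j) w ^+ i) * \sum_(k < o) \sum_(i < k) v ^+ i).
  have Zv : Zint v by apply: integral_expr.
  by apply: integral_mul; do ?apply: integral_sum => ? _; apply: integral_expr.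
exists o => //; rewrite expr1 expr0 mul1r mulrA geometric_sum mulr_sumr.
under eq_bigr do rewrite geometric_sum.
by rewrite sumrB sumr_const card_ord sum_v subr0.
Qed.

Lemma one_sub_unity_root_2pow_dvd2 (w : K) s :
  Zint w -> w ^+ (2 ^ s) = -1 -> exists2 U, Zint U & (1 - w) ^+ (2 ^ s) * U = 2.
Proof.
elim: s w => [|s IHs] w Zw w2s.
  by exists 1; [apply: integral1 | rewrite expn0 !expr1 in w2s *; rewrite w2s; ring].
have w2_2s : (w ^+ 2) ^+ (2 ^ s) = -1 by rewrite -exprM -expnS.
have [U ZU <-] := IHs _ (integral_expr 2 Zw) w2_2s.
pose T := \sum_(i < (2 ^ s.+1).+1) w ^+ i.
have ZT : Zint T by apply: integral_sum => i _; apply: integral_expr.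
have sub1_w2 : 1 - w ^+ 2 = (1 - w) ^+ 2 * T.
  have add1_w : 1 + w = (1 - w) * T by rewrite geometric_sum exprS w2s; ring.
  by rewrite expr2 -mulrA -add1_w; ring.
exists (T ^+ (2 ^ s) * U); first by apply: integral_mul => //; apply: integral_expr.
by rewrite sub1_w2 exprMn expnS exprM mulrA.
Qed.

Lemma unity_root_2pow_eqN1 (w : K) j :
  w ^+ (2 ^ j) = 1 -> w != 1 -> exists2 s, (s < j)%N & w ^+ (2 ^ s) = -1.
Proof.
elim: j => [|j IHj] w2j w_neq1.
  by rewrite expn0 expr1 in w2j; rewrite w2j eqxx in w_neq1.
have [x1 | x_neq1] := eqVneq (w ^+ (2 ^ j)) 1.
  by have [s s_lt_j w2s] := IHj x1 w_neq1; exists s => //; apply: ltnW.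
exists j => //; apply/eqP.
by have := sqrf_eq1 (w ^+ (2 ^ j)); rewrite -exprM -expnSr w2j eqxx (negbTE x_neq1).
Qed.

Lemma two_adic_one_sub_unity_root (w : K) n :
  (0 < n)%N -> w ^+ n = 1 -> w != 1 -> w != -1 ->
  exists a b, [/\ (0 < a)%N, (b.*2 <= a)%N, two_adic_le (1 - w) a b
                & (b.*2 = a -> w ^+ 2 = -1)].
Proof.
move=> n_gt0 wn1 w_neq1 w_neqN1; have Zw := unity_root_integral n_gt0 wn1.
have n_eq : n = (2 ^ logn 2 n * n`_2^')%N by rewrite -p_part partnC.
have odd_o : odd (n`_2^')%N by rewrite odd_2'nat part_pnat.
have [w2j1 | w2j_neq1] := eqVneq (w ^+ (2 ^ logn 2 n)) 1; last first.
  exists 1%N, 0%N; split => //.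
  by apply: two_adic_one_sub_unity_root_odd odd_o _ w2j_neq1 Zw; rewrite -n_eq.
have [[|s] _ w2s] := unity_root_2pow_eqN1 w2j1 w_neq1.
  by rewrite expn0 expr1 in w2s; rewrite w2s eqxx in w_neqN1.
have [U ZU eU] := one_sub_unity_root_2pow_dvd2 Zw w2s.
have s_pos := expn_gt0 2 s.
exists (2 ^ s.+1)%N, 1%N; split; rewrite ?expnS; [lia | lia | |].
- by exists U => //; exists 1%N; rewrite // -expnS eU mulr1.
- by case: s w2s {eU} s_pos => [|s] w2s; rewrite ?expnS; [rewrite expr2 in w2s | lia].
Qed.

Lemma unity_roots_sqrN1_of_dvd4 (w1 w3 X : K) n1 n3 :
    (0 < n1)%N -> w1 ^+ n1 = 1 -> w1 != 1 -> w1 != -1 ->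
    (0 < n3)%N -> w3 ^+ n3 = 1 -> w3 != 1 -> w3 != -1 ->
    Zint X -> (1 - w1) ^+ 2 * (1 - w3) ^+ 2 = 4 * X ->
  w1 ^+ 2 = -1 /\ w3 ^+ 2 = -1.
Proof.
move=> n1_gt0 w1n1 w1_neq1 w1_neqN1 n3_gt0 w3n3 w3_neq1 w3_neqN1 ZX eX.
have [a1 [b1 [a1_gt0 b1_le [U1 ZU1 [c1 odd_c1 e1]] sqr1]]] :=
  two_adic_one_sub_unity_root n1_gt0 w1n1 w1_neq1 w1_neqN1.
have [a3 [b3 [a3_gt0 b3_le [U3 ZU3 [c3 odd_c3 e3]]] sqr3]] :=
  two_adic_one_sub_unity_root n3_gt0 w3n3 w3_neq1 w3_neqN1.
(* Raised to the power [a1 * a3], the left side of [eX] divides [2 ^+ e.*2]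
   times an odd integer and the right side is [2 ^+ (a1 * a3).*2] times an
   integer, so [e = a1 * a3], which forces [b1.*2 = a1] and [b3.*2 = a3]. *)
suff e_eq : (a3 * b1 + a1 * b3 = a1 * a3)%N by split; [apply: sqr1 | apply: sqr3]; nia.
set e := (a3 * b1 + a1 * b3)%N.
have [e_lt | //] : (e < a1 * a3 \/ e = a1 * a3)%N by nia.
pose c := (c1 ^ a3.*2 * c3 ^ a1.*2)%N.
pose Y := X ^+ (a1 * a3) * (U1 ^+ a3.*2 * U3 ^+ a1.*2).
have key : 2 ^+ e.*2 * c%:R = 2 ^+ (a1 * a3).*2 * Y.
  have -> : 2 ^+ e.*2 * c%:R = ((1 - w1) ^+ a1 * U1) ^+ a3.*2 * ((1 - w3) ^+ a3 * U3) ^+ a1.*2.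
    rewrite e1 e3 !exprMn -!exprM mulrACA -exprD natrM !natrX; congr (2 ^+ _ * _); lia.
  have four : 4 = 2 ^+ 2 :> K by rewrite expr2 -natrM.
  have -> : 2 ^+ (a1 * a3).*2 = 4 ^+ (a1 * a3) :> K by rewrite four -exprM mul2n.
  rewrite /Y mulrA -exprMn -eX !exprMn -!exprM [LHS]mulrACA.
  by congr (_ * _ * _); rewrite -exprD; congr (_ ^+ _); lia.
have odd_c : odd c by rewrite oddM !oddX odd_c1 odd_c3 !orbT.
have ZY : Zint Y.
  by do 2?apply: integral_mul; apply: integral_expr.
have k_gt0 : (0 < (a1 * a3).*2 - e.*2)%N by lia.
exfalso; move/negP: (odd_neq_pow2_mul odd_c k_gt0 ZY); apply; apply/eqP.
have two_e_neq0 : (2 : K) ^+ e.*2 != 0 by rewrite expf_neq0 ?pnatr_eq0.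
apply: (mulfI two_e_neq0); rewrite key [RHS]mulrA -exprD subnKC //; lia.
Qed.

Lemma unity_root_neq0 (z : K) n : (0 < n)%N -> z ^+ n = 1 -> z != 0.
Proof.
move=> n_gt0 zn1; apply/eqP => z0; move/eqP: zn1.
by rewrite z0 expr0n gtn_eqF // eq_sym oner_eq0.
Qed.

Lemma prim_root_neq0 n (z : K) : n.-primitive_root z -> z != 0.
Proof. by move=> pz; apply: unity_root_neq0 (prim_order_gt0 pz) (prim_expr_order pz). Qed.

Lemma prim_root_neq1N1 n (z : K) :
  (2 < n)%N -> n.-primitive_root z -> z != 1 /\ z != -1.
Proof.
move=> n_gt2 pz; split; apply/eqP => z_eq.
  by have := prim_order_dvd pz 1; rewrite z_eq expr1 eqxx dvdn1 => /eqP n1; rewrite n1 in n_gt2.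
have := prim_order_dvd pz 2; rewrite z_eq sqrrN expr1n eqxx => /(dvdn_leq (isT : 0 < 2)%N).
by rewrite leqNgt n_gt2.
Qed.

Lemma fourcos2_mul_eq4_sqrN1 p q r (z1 z2 z3 : K) :
    (2 < p)%N -> (2 < r)%N -> p.-primitive_root z1 -> q.-primitive_root z2 ->
    r.-primitive_root z3 -> fourcos2 z1 * fourcos2 z3 = 4 * fourcos2 z2 ->
  z1 ^+ 2 = -1 /\ z3 ^+ 2 = -1.
Proof.
move=> p_gt2 r_gt2 pz1 pz2 pz3 eq4.
have [z1_neq1 z1_neqN1] := prim_root_neq1N1 p_gt2 pz1.
have [z3_neq1 z3_neqN1] := prim_root_neq1N1 r_gt2 pz3.
have unity_opp n (z : K) : n.-primitive_root z -> (- z) ^+ (n * 2) = 1.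
  by move=> pz; rewrite mulnC exprM sqrrN -exprM mulnC exprM (prim_expr_order pz) expr1n.
have order_gt0 n (z : K) : n.-primitive_root z -> (0 < n * 2)%N.
  by move/prim_order_gt0; rewrite muln_gt0 andbT.
have sqr_add1 n (z : K) : n.-primitive_root z -> (1 + z) ^+ 2 = z * fourcos2 z.
  by move=> /prim_root_neq0 z_neq0; rewrite /fourcos2; field.
have Zprim n (z : K) : n.-primitive_root z -> Zint z.
  by move=> pz; apply: unity_root_integral (prim_order_gt0 pz) (prim_expr_order pz).
have Zfc2 : Zint (fourcos2 z2).
  have Zz2 := Zprim _ _ pz2.
  have Zz2V : Zint z2^-1.
    by apply: (unity_root_integral (prim_order_gt0 pz2)); rewrite exprVn prim_expr_order ?invr1.
  by apply: integral_add => //; apply: integral_add => //; apply: integral_nat.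
suff : (- z1) ^+ 2 = -1 /\ (- z3) ^+ 2 = -1 by rewrite !sqrrN.
apply: (unity_roots_sqrN1_of_dvd4 (X := z1 * z3 * fourcos2 z2)
  (order_gt0 _ _ pz1) (unity_opp _ _ pz1) _ _ (order_gt0 _ _ pz3) (unity_opp _ _ pz3));
  rewrite ?eqr_oppLR ?opprK ?eqr_opp //.
- by apply: integral_mul => //; apply: integral_mul; [apply: Zprim pz1 | apply: Zprim pz3].
- by rewrite (sqr_add1 _ _ pz1) (sqr_add1 _ _ pz3) mulrACA eq4; ring.
Qed.

Lemma fourcos2_neq0 (z : K) : z != 0 -> z != -1 -> fourcos2 z != 0.
Proof.
move=> z_neq0 z_neqN1; rewrite /fourcos2 (_ : _ + _ = z^-1 * (z + 1) ^+ 2); last by field.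
by rewrite mulf_neq0 ?invr_eq0 // expf_neq0 // addr_eq0.
Qed.

Lemma four_sub_fourcos2_neq0 (z : K) : z != 0 -> z != 1 -> 4 - fourcos2 z != 0.
Proof.
move=> z_neq0 z_neq1; rewrite /fourcos2 (_ : _ - _ = - z^-1 * (z - 1) ^+ 2); last by field.
by rewrite mulf_neq0 ?oppr_eq0 ?invr_eq0 // expf_neq0 // subr_eq0.
Qed.

Lemma fourcos2_sqrN1 (z : K) : z ^+ 2 = -1 -> fourcos2 z = 2.
Proof.
move=> z2; have z_neq0 : z != 0.
  by apply/eqP => z0; move: z2; rewrite z0 expr0n /= => /eqP; rewrite eq_sym oppr_eq0 oner_eq0.
rewrite /fourcos2 (_ : z^-1 = - z) ?addrK //.
by apply: (mulfI z_neq0); rewrite mulfV // mulrN -expr2 z2 opprK.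
Qed.
End IntegralRootsOfUnity.

Section Mx3.
Variable R : pzRingType.

Definition mx3 (a b c d e f g h i : R) : 'M[R]_3 :=
  \matrix_(x < 3, y < 3) (nth [::] [:: [:: a; b; c]; [:: d; e; f]; [:: g; h; i]] x)`_y.

Lemma mx3_mul a b c d e f g h i a' b' c' d' e' f' g' h' i' :
  mx3 a b c d e f g h i * mx3 a' b' c' d' e' f' g' h' i' =
  mx3 (a * a' + b * d' + c * g') (a * b' + b * e' + c * h') (a * c' + b * f' + c * i')
      (d * a' + e * d' + f * g') (d * b' + e * e' + f * h') (d * c' + e * f' + f * i')
      (g * a' + h * d' + i * g') (g * b' + h * e' + i * h') (g * c' + h * f' + i * i').
Proof.
apply/matrixP => x y; rewrite !mxE !big_ord_recr big_ord0 /= !mxE add0r.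
by case: x => [[|[|[|]]] ?] //; case: y => [[|[|[|]]] ?].
Qed.

Lemma mx3_scalar (a : R) : a%:M = mx3 a 0 0 0 a 0 0 0 a.
Proof.
by apply/matrixP => x y; rewrite !mxE; case: x => [[|[|[|]]] ?] //; case: y => [[|[|[|]]] ?].
Qed.

Lemma mx3_one : 1 = mx3 1 0 0 0 1 0 0 0 1.
Proof. exact: mx3_scalar. Qed.

Lemma mx3_zero : 0 = mx3 0 0 0 0 0 0 0 0 0.
Proof.
by apply/matrixP => x y; rewrite !mxE; case: x => [[|[|[|]]] ?] //; case: y => [[|[|[|]]] ?].
Qed.

Lemma mx3_add a b c d e f g h i a' b' c' d' e' f' g' h' i' :
  mx3 a b c d e f g h i + mx3 a' b' c' d' e' f' g' h' i' =
  mx3 (a + a') (b + b') (c + c') (d + d') (e + e') (f + f') (g + g') (h + h') (i + i').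
Proof.
apply/matrixP => x y; rewrite !mxE.
by case: x => [[|[|[|]]] ?] //; case: y => [[|[|[|]]] ?] //=; rewrite addr0.
Qed.

Lemma mx3_scale k a b c d e f g h i :
  k *: mx3 a b c d e f g h i =
  mx3 (k * a) (k * b) (k * c) (k * d) (k * e) (k * f) (k * g) (k * h) (k * i).
Proof.
apply/matrixP => x y; rewrite !mxE.
by case: x => [[|[|[|]]] ?] //; case: y => [[|[|[|]]] ?] //=; rewrite mulr0.
Qed.

Lemma mx3_opp a b c d e f g h i :
  - mx3 a b c d e f g h i = mx3 (- a) (- b) (- c) (- d) (- e) (- f) (- g) (- h) (- i).
Proof. by rewrite -scaleN1r mx3_scale !mulN1r. Qed.
End Mx3.

Section Reflections.
Variables (K : numClosedFieldType) (al be l m : K).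

Lemma s1E : s1 al be l m = mx3 (-1) al be 0 1 0 0 0 1.
Proof.
by apply/matrixP => x y; rewrite !mxE; case: x => [[|[|[|]]] ?] //; case: y => [[|[|[|]]] ?] //=;
  ring.
Qed.

Lemma s2E : s2 al be l m = mx3 1 0 0 1 (-1) l 0 0 1.
Proof.
by apply/matrixP => x y; rewrite !mxE; case: x => [[|[|[|]]] ?] //; case: y => [[|[|[|]]] ?] //=;
  ring.
Qed.

Lemma s3E : s3 al be l m = mx3 1 0 0 0 1 0 1 m (-1).
Proof.
by apply/matrixP => x y; rewrite !mxE; case: x => [[|[|[|]]] ?] //; case: y => [[|[|[|]]] ?] //=;
  ring.
Qed.
End Reflections.

Lemma horner_mx_eq_on_roots (F : fieldType) n (A : 'M[F]_n.+1) (rs : seq F)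
    (p q : {poly F}) :
    uniq rs -> horner_mx A (\prod_(r <- rs) ('X - r%:P)) = 0 ->
    {in rs, forall r, p.[r] = q.[r]} ->
  horner_mx A p = horner_mx A q.
Proof.
move=> rs_uniq A_rs pq_rs; apply/eqP; rewrite -subr_eq0 -rmorphB /=.
have [d ->] : exists d, p - q = d * \prod_(r <- rs) ('X - r%:P).
  apply: uniq_roots_prod_XsubC; last by rewrite uniq_rootsE.
  by apply/allP => r /pq_rs pq_r; rewrite /root hornerD hornerN pq_r subrr.
by rewrite rmorphM /= A_rs mulr0.
Qed.

Section HalfTurn.
Variable K : numClosedFieldType.
Implicit Types (al be l m z : K).

Lemma prim_root_half n z : (2 * n).-primitive_root z -> z ^+ n = -1.
Proof.
move=> pz; have n_gt0 : (0 < n)%N by move: (prim_order_gt0 pz); rewrite muln_gt0.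
apply/eqP; have := sqrf_eq1 (z ^+ n); rewrite -exprM mulnC prim_expr_order //.
by rewrite eqxx -(prim_order_dvd pz) gtnNdvd //; lia.
Qed.

Lemma s2s3E al be l m :
  s2 al be l m * s3 al be l m = mx3 1 0 0 (1 + l) (l * m - 1) (- l) 1 m (-1).
Proof. by rewrite s2E s3E mx3_mul; congr mx3; ring. Qed.

Definition s2s3_quad l m : {poly K} := 'X^2 - (l * m - 2)%:P * 'X + 1.

Lemma horner_s2s3_quad al be l m :
  horner_mx (s2 al be l m * s3 al be l m) (s2s3_quad l m) =
  mx3 (4 - l * m) 0 0 (2 + l) 0 0 (2 + m) 0 0.
Proof.
rewrite rmorphD rmorphB rmorphXn rmorphM /= horner_mx_X horner_mx_C rmorph1.
by rewrite s2s3E mx3_scalar mx3_one expr2 !(mx3_mul, mx3_opp, mx3_add); congr mx3; ring.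
Qed.

Lemma horner_s2s3_char al be l m :
  horner_mx (s2 al be l m * s3 al be l m) (('X - 1) * s2s3_quad l m) = 0.
Proof.
rewrite rmorphM rmorphB /= horner_mx_X rmorph1 horner_s2s3_quad s2s3E mx3_one.
by rewrite mx3_opp mx3_add mx3_mul mx3_zero; congr mx3; ring.
Qed.

Lemma s2s3_quad_roots l m z : z != 0 -> l * m = fourcos2 z ->
  \prod_(r <- [:: 1; z; z^-1]) ('X - r%:P) = ('X - 1) * s2s3_quad l m.
Proof.
move=> z_neq0 lmE; rewrite !big_cons big_nil mulr1 /s2s3_quad lmE /fourcos2 polyC1.
congr (_ * _); rewrite (_ : 2 + z + z^-1 - 2 = z + z^-1); last by ring.
have -> : 1 = z%:P * z^-1%:P :> {poly K} by rewrite -polyCM mulfV.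
by rewrite polyCD; ring.
Qed.

(* The involution fixing the fixed vector
   [a1 + ((2 + l) a2 + (2 + m) a3) / (4 - l m)] of [s2 s3] and negating
   the plane spanned by [a2] and [a3]. *)
Definition half_turn l m : 'M[K]_3 :=
  mx3 1 0 0 (2 * (2 + l) / (4 - l * m)) (-1) 0 (2 * (2 + m) / (4 - l * m)) 0 (-1).

Lemma s2s3_expr_half al be l m z r1 :
    (2 * r1).-primitive_root z -> (1 < r1)%N -> l * m = fourcos2 z ->
  (s2 al be l m * s3 al be l m) ^+ r1 = half_turn l m.
Proof.
move=> pz r1_gt1 lmE; have z_neq0 := prim_root_neq0 pz.
have z2_neq1 : z ^+ 2 != 1 by rewrite -(prim_order_dvd pz) gtnNdvd //; lia.
have z_neq1 : z != 1 by apply: contraNneq z2_neq1 => ->; rewrite expr1n.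
have d_neq0 : 4 - l * m != 0 by rewrite lmE four_sub_fourcos2_neq0.
have char0 : horner_mx (s2 al be l m * s3 al be l m)
    (\prod_(r <- [:: 1; z; z^-1]) ('X - r%:P)) = 0.
  by rewrite (s2s3_quad_roots z_neq0 lmE) horner_s2s3_char.
(* ['X^r1] and [q] agree on the eigenvalues [1], [z], [z^-1] of [s2 s3]. *)
pose q := ((4 - l * m)^-1 * 2)%:P * s2s3_quad l m - 1.
set M := s2 al be l m * s3 al be l m in char0 *.
have -> : M ^+ r1 = horner_mx M q.
  rewrite -{1}(horner_mx_X M) -rmorphXn; apply: (horner_mx_eq_on_roots _ char0).
    rewrite /= !inE !negb_or eq_sym z_neq1 (eq_sym 1) invr_eq1 z_neq1 /= andbT.
    by apply: contra z2_neq1 => /eqP z_inv; rewrite expr2 {2}z_inv mulfV.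
  have zr1 := prim_root_half pz.
  have dz_neq0 : 4 * z - ((2 + z) * z + 1) != 0.
    rewrite (_ : _ - _ = z * (4 - fourcos2 z)); last by rewrite /fourcos2; field.
    by rewrite mulf_neq0 ?four_sub_fourcos2_neq0.
  move=> r; rewrite !inE => /or3P[] /eqP ->; rewrite /q /s2s3_quad !hornerE lmE /fourcos2;
    by rewrite ?expr1n ?exprVn ?zr1 ?invrN ?invr1; field; rewrite z_neq0 dz_neq0.
rewrite /q rmorphB rmorphM /= horner_mx_C horner_s2s3_quad rmorph1 mx3_scalar mx3_one.
by rewrite mx3_mul mx3_opp mx3_add /half_turn; congr mx3; field.
Qed.
End HalfTurn.

Section Commutator.
Variables (K : numClosedFieldType) (al be l m : K).
Let d := 4 - l * m.
Let D := Delta al be (l * m) l m.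
(* [T = d *: (s1 * half_turn l m)], with the denominators cleared. *)
Let T := s1 al be l m * mx3 d 0 0 (2 * (2 + l)) (- d) 0 (2 * (2 + m)) 0 (- d).
Let U := s2 al be l m * T ^+ 2 * s2 al be l m.

Lemma s2_comm_entry00 : (T ^+ 2 * U) 0 0 - (U * T ^+ 2) 0 0 =
  -4 * (D * (D - d) * d * (m + 2) * al * (al * l + 2 * be)).
Proof. by rewrite /U /T s1E s2E !expr2 !mx3_mul !mxE /= /D /Delta /d; ring. Qed.

Lemma s2_comm_entry20 : (T ^+ 2 * U) 2 0 - (U * T ^+ 2) 2 0 =
  4 * (D * d * (m + 2) * al * ((m + 2) * (al * l + 2 * be) + l * m - 4)).
Proof. by rewrite /U /T s1E s2E !expr2 !mx3_mul !mxE /= /D /Delta /d; ring. Qed.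

Lemma s2_comm_entry12 : m = -2 ->
  (T ^+ 2 * U) 1 2 - (U * T ^+ 2) 1 2 = -2 * (D * d ^+ 3 * (al * l + 2 * be)).
Proof. by move=> m2; rewrite /U /T s1E s2E !expr2 !mx3_mul !mxE /= /D /Delta /d m2; ring. Qed.

Lemma half_turn_comm_s2_cases : d != 0 -> al != 0 ->
  let t := s1 al be l m * half_turn l m in
  GRing.comm (t ^+ 2) (s2 al be l m * t ^+ 2 * s2 al be l m) ->
  [\/ D = 0, al = 1 /\ D = d | m = -2 /\ al * l + 2 * be = 0].
Proof.
move=> d_neq0 al_neq0 t comm_t.
have comm_T : T ^+ 2 * U = U * T ^+ 2.
  rewrite /U; have -> : T = d *: t.
    rewrite /T /t /half_turn scalerAr mx3_scale.
    by congr (_ * mx3 _ _ _ _ _ _ _ _ _); rewrite /d; field.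
  rewrite exprZn; do ![rewrite -scalerAl | rewrite -scalerAr].
  by rewrite !scalerA comm_t.
have := s2_comm_entry00; rewrite comm_T subrr => /esym/eqP.
rewrite !mulf_eq0 oppr_eq0 pnatr_eq0 (negbTE al_neq0) (negbTE d_neq0) /= orbF.
have := s2_comm_entry20; rewrite comm_T subrr => /esym/eqP.
rewrite !mulf_eq0 pnatr_eq0 (negbTE al_neq0) (negbTE d_neq0) /= orbF.
have [D0 | D_neq0] := eqVneq D 0; first by constructor 1.
have [m2 | m2_neq0] := eqVneq (m + 2) 0.
  move=> _ _; have mE : m = -2 by apply/eqP; rewrite -addr_eq0 m2.
  have := s2_comm_entry12 mE; rewrite comm_T subrr => /esym/eqP.
  rewrite !mulf_eq0 oppr_eq0 pnatr_eq0 (negbTE D_neq0) (negbTE d_neq0) /=.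
  by move=> /eqP F0; constructor 3.
rewrite /= !orbF => /eqP E20 /orP[/eqP D_d | /eqP F0]; last first.
  move: E20; rewrite F0 mulr0 add0r => /eqP; rewrite subr_eq0 => /eqP lm4.
  by rewrite /d lm4 subrr eqxx in d_neq0.
constructor 2; split; last by apply/eqP; rewrite -subr_eq0 D_d.
have : (al - 1) * (l * m - 4) = 0.
  rewrite (_ : (al - 1) * _ = 2 * (D - d) + ((m + 2) * (al * l + 2 * be) + l * m - 4)).
    by rewrite D_d E20; ring.
  by rewrite /D /Delta /d; ring.
move/eqP; rewrite mulf_eq0 subr_eq0 -oppr_eq0 opprB -/d (negbTE d_neq0) orbF.
by move/eqP.
Qed.
End Commutator.

Local Notation pt := ('I_3 * bool)%type.

Section SignedPermutations.

Lemma flip3K : involutive flip3.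
Proof. by case=> i b; rewrite /flip3 negbK. Qed.

Definition flip_perm : {perm pt} := perm (can_inj flip3K).

Lemma WB3_cent : WB3 = 'C[flip_perm]%g.
Proof.
apply/setP => s; rewrite inE cent1E; apply/forallP/eqP => [s_flip | /permP s_flip x].
  by apply/permP => x; rewrite !permM !permE /= -(eqP (s_flip x)).
by have := s_flip x; rewrite !permM !permE => ->.
Qed.

Lemma WB3P (s : {perm pt}) : reflect (forall x, s (flip3 x) = flip3 (s x)) (s \in WB3).
Proof. by rewrite inE; apply: (iffP forallP) => s_flip x; apply/eqP. Qed.

Lemma ord3_cases (i : 'I_3) : [\/ i = 0, i = 1 | i = 2].
Proof.
by case: i => [[|[|[|//]]] lt_i3]; [constructor 1 | constructor 2 | constructor 3]; apply: val_inj.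
Qed.

Lemma pt_cases (P : pt -> Prop) :
    P (0, false) -> P (0, true) -> P (1, false) -> P (1, true) ->
    P (2, false) -> P (2, true) ->
  forall x, P x.
Proof. by move=> ? ? ? ? ? ? [i []]; case: (ord3_cases i) => ->. Qed.

Lemma WB3_eq (g h : {perm pt}) : g \in WB3 -> h \in WB3 ->
  g (0, false) = h (0, false) -> g (1, false) = h (1, false) ->
  g (2, false) = h (2, false) -> g = h.
Proof.
move=> /WB3P g_flip /WB3P h_flip g0 g1 g2; apply/permP.
by apply: pt_cases => //; rewrite -[(_, true)]/(flip3 (_, false)) g_flip h_flip ?g0 ?g1 ?g2.
Qed.

Lemma WB3_index_inj g : g \in WB3 -> injective (fun i => (g (i, false)).1).
Proof.
move=> /WB3P g_flip i j /= eq_ij.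
have : g (i, false) = g (j, false) \/ g (i, false) = flip3 (g (j, false)).
  move: eq_ij; case: (g (i, false)) (g (j, false)) => [a b] [a' b'] /= <-.
  by case: b b' => [] []; [left | right | right | left].
by case; rewrite -?g_flip => /perm_inj[].
Qed.

Lemma WB3_index_fixed g i j b :
  g \in WB3 -> g (j, false) = (j, false) -> g (i, false) = (j, b) -> i = j.
Proof. by move=> gW gj gi; apply: (WB3_index_inj gW); rewrite /= gi gj. Qed.

Definition nswap02_fun (x : pt) : pt :=
  match val x.1 with 0 => (2, ~~ x.2) | 1 => x | _ => (0, ~~ x.2) end.
Definition neg2_fun (x : pt) : pt := if val x.1 == 2 then flip3 x else x.
Definition swap12_fun (x : pt) : pt :=
  match val x.1 with 0 => x | 1 => (2, x.2) | _ => (1, x.2) end.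

Lemma nswap02_funK : involutive nswap02_fun. Proof. by apply: pt_cases. Qed.
Lemma neg2_funK : involutive neg2_fun. Proof. by apply: pt_cases. Qed.
Lemma swap12_funK : involutive swap12_fun. Proof. by apply: pt_cases. Qed.

Definition nswap02 : {perm pt} := perm (can_inj nswap02_funK).
Definition neg2 : {perm pt} := perm (can_inj neg2_funK).
Definition swap12 : {perm pt} := perm (can_inj swap12_funK).

Lemma nswap02_cent : nswap02 \in 'C[flip_perm]%g.
Proof. by rewrite -WB3_cent; apply/WB3P; apply: pt_cases; rewrite !permE. Qed.
Lemma neg2_cent : neg2 \in 'C[flip_perm]%g.
Proof. by rewrite -WB3_cent; apply/WB3P; apply: pt_cases; rewrite !permE. Qed.
Lemma swap12_cent : swap12 \in 'C[flip_perm]%g.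
Proof. by rewrite -WB3_cent; apply/WB3P; apply: pt_cases; rewrite !permE. Qed.

Section Generation.
Variable H : {perm pt} -> Prop.
Hypotheses (H1 : H 1%g) (HM : forall g h, H g -> H h -> H (g * h)%g).
Hypotheses (H_nswap02 : H nswap02) (H_neg2 : H neg2) (H_swap12 : H swap12).

Let HW h := H h /\ h \in WB3.

Lemma HWM g h : HW g -> HW h -> HW (g * h)%g.
Proof.
case=> Hg gW [Hh hW]; split; first exact: HM.
by rewrite WB3_cent in gW hW *; apply: groupM.
Qed.

Lemma HW_nswap02 : HW nswap02. Proof. by split; rewrite // WB3_cent nswap02_cent. Qed.
Lemma HW_neg2 : HW neg2. Proof. by split; rewrite // WB3_cent neg2_cent. Qed.
Lemma HW_swap12 : HW swap12. Proof. by split; rewrite // WB3_cent swap12_cent. Qed.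

(* Writing [g = (g * h^-1) * h] reduces [g] to the pointwise stabiliser of [xs]. *)
Lemma H_transversal (xs : seq pt) g h :
    HW h -> g \in WB3 -> {in xs, forall x, h x = g x} ->
    (forall k, k \in WB3 -> {in xs, forall x, k x = x} -> H k) ->
  H g.
Proof.
move=> [Hh hW] gW hg_xs H_stab; rewrite -(mulgVK h g); apply: HM Hh; apply: H_stab.
  by rewrite WB3_cent in gW hW *; rewrite groupM ?groupV.
by move=> x /hg_xs hx_gx; rewrite permM -hx_gx permK.
Qed.

Lemma WB3_gen_stab01 g : g \in WB3 -> g (0, false) = (0, false) ->
  g (1, false) = (1, false) -> H g.
Proof.
move=> gW g0 g1; have := @pt_cases (fun y => g (2, false) = y -> H g); apply=> // g2;
  try by [move/(congr1 val): (WB3_index_fixed gW g0 g2)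
         | move/(congr1 val): (WB3_index_fixed gW g1 g2)].
- suff -> : g = 1%g by [].
  by apply: WB3_eq; rewrite ?perm1 // WB3_cent group1.
- suff -> : g = neg2 by [].
  by apply: WB3_eq; rewrite ?permE // WB3_cent neg2_cent.
Qed.

Lemma WB3_gen_stab0_by g h : HW h -> g \in WB3 -> g (0, false) = (0, false) ->
  h (0, false) = (0, false) -> h (1, false) = g (1, false) -> H g.
Proof.
move=> HWh gW g0 h0 h1; apply: (@H_transversal [:: (0, false); (1, false)] _ _ HWh gW).
  by move=> x; rewrite !inE => /orP[] /eqP ->; rewrite ?g0.
by move=> k kW k_fix; apply: WB3_gen_stab01; rewrite // k_fix // !inE eqxx ?orbT.
Qed.

Lemma WB3_gen_stab0 g : g \in WB3 -> g (0, false) = (0, false) -> H g.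
Proof.
move=> gW g0; have := @pt_cases (fun y => g (1, false) = y -> H g); apply=> // g1;
  try by move/(congr1 val): (WB3_index_fixed gW g0 g1).
- exact: WB3_gen_stab01.
- apply: (WB3_gen_stab0_by (HWM (HWM HW_swap12 HW_neg2) HW_swap12) gW g0);
    by rewrite ?g1 !permM !permE.
- by apply: (WB3_gen_stab0_by HW_swap12 gW g0); rewrite ?g1 !permE.
- apply: (WB3_gen_stab0_by (HWM HW_swap12 HW_neg2) gW g0);
    by rewrite ?g1 !permM !permE.
Qed.

Lemma WB3_gen_by g h : HW h -> g \in WB3 -> h (0, false) = g (0, false) -> H g.
Proof.
move=> HWh gW h0; apply: (@H_transversal [:: (0, false)] _ _ HWh gW).
  by move=> x; rewrite inE => /eqP ->.
by move=> k kW k_fix; apply: WB3_gen_stab0; rewrite // k_fix // inE.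
Qed.

Lemma WB3_gen g : g \in WB3 -> H g.
Proof.
move=> gW; have := @pt_cases (fun y => g (0, false) = y -> H g); apply=> // g0.
- exact: WB3_gen_stab0.
- apply: (WB3_gen_by (HWM (HWM HW_nswap02 HW_neg2) HW_nswap02) gW);
    by rewrite g0 !permM !permE.
- apply: (WB3_gen_by (HWM (HWM HW_nswap02 HW_neg2) HW_swap12) gW);
    by rewrite g0 !permM !permE.
- by apply: (WB3_gen_by (HWM HW_nswap02 HW_swap12) gW); rewrite g0 !permM !permE.
- by apply: (WB3_gen_by (HWM HW_nswap02 HW_neg2) gW); rewrite g0 !permM !permE.
- by apply: (WB3_gen_by HW_nswap02 gW); rewrite g0 !permE.
Qed.
End Generation.
End SignedPermutations.

Section SignedRootIsom.
Variables (K : numClosedFieldType) (al be l m : K).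
Local Notation G := (inG al be l m).
Variable U : 'M[K]_3.
Hypothesis U_unit : U \in unitmx.
Variable sigma : 'I_3 -> {perm pt}.

Definition signed_root (x : pt) : 'rV[K]_3 := (-1) ^+ x.2 *: row x.1 U.

Hypothesis reflR_sigma :
  forall k x, signed_root x *m reflR al be l m k = signed_root (sigma k x).
Hypothesis sigma_gen : forall H : {perm pt} -> Prop,
  H 1%g -> (forall g h, H g -> H h -> H (g * h)%g) -> (forall k, H (sigma k)) ->
  forall g, g \in WB3 -> H g.

Lemma signed_root_flip x : signed_root (flip3 x) = - signed_root x.
Proof. by case: x => i []; rewrite /signed_root /= ?expr0 ?expr1 ?scale1r ?scaleN1r ?opprK. Qed.

Lemma signed_root_inj : injective signed_root.
Proof.
move=> [i b] [j c] /(congr1 (fun v => (v *m invmx U) 0 i)).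
rewrite /signed_root -!scalemxAl -!row_mul mulmxV // !mxE eqxx /= mulr1.
have sgn_neq0 (e : bool) : (-1) ^+ e != 0 :> K by rewrite signr_eq0.
have [<- | neq_ji] := eqVneq j i; last by rewrite mulr0 => /eqP; rewrite (negbTE (sgn_neq0 b)).
by rewrite mulr1 => /signr_inj ->.
Qed.

Definition perm_of_mx (x : 'M[K]_3) : {perm pt} :=
  odflt 1%g [pick s : {perm pt} | [forall y, signed_root y *m x == signed_root (s y)]].

Lemma perm_of_mxP x (s : {perm pt}) :
  (forall y, signed_root y *m x = signed_root (s y)) -> perm_of_mx x = s.
Proof.
move=> xs; rewrite /perm_of_mx; case: pickP => [s' /forallP xs' | /(_ s)] /=.
  by apply/permP => y; apply: signed_root_inj; rewrite -xs (eqP (xs' y)).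
by move/negbT/negP; case; apply/forallP => y; apply/eqP.
Qed.

Lemma inG_mul x y : G x -> G y -> G (x * y).
Proof. by elim=> [|i x' _ IHx] Gy; rewrite ?mul1r // -mulrA; apply/inGmul/IHx. Qed.

Lemma perm_of_inG x :
  G x -> forall y, signed_root y *m x = signed_root (perm_of_mx x y).
Proof.
move=> Gx; suff [s xs] : exists s : {perm pt}, forall y, signed_root y *m x = signed_root (s y).
  by rewrite (perm_of_mxP xs).
elim: Gx => [|i x' _ [s xs]]; first by exists 1%g => y; rewrite perm1 mulmx1.
by exists (sigma i * s)%g => y; rewrite [_ * _]/(_ *m _) mulmxA reflR_sigma xs permM.
Qed.

Lemma perm_of_mxM x y :
  G x -> G y -> perm_of_mx (x * y) = (perm_of_mx x * perm_of_mx y)%g.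
Proof.
move=> Gx Gy; apply: perm_of_mxP => z.
by rewrite [x * y]/(x *m y) mulmxA (perm_of_inG Gx) (perm_of_inG Gy) permM.
Qed.

Theorem isom_WB3_signed_roots : isom_WB3 G.
Proof.
exists perm_of_mx; split; first exact: perm_of_mxM.
  move=> x y Gx Gy eq_xy; rewrite -[x](mulKmx U_unit) -[y](mulKmx U_unit); congr (_ *m _).
  apply/row_matrixP => i.
  have row_i : row i U = signed_root (i, false) by rewrite /signed_root expr0 scale1r.
  by rewrite !row_mul row_i (perm_of_inG Gx) (perm_of_inG Gy) eq_xy.
move=> g; split.
  apply: (sigma_gen (H := fun g => exists2 x, G x & perm_of_mx x = g))
    => [| _ _ [x Gx <-] [y Gy <-] | k].
  - by exists 1; [apply: inG1 | apply: perm_of_mxP => y; rewrite perm1 mulmx1].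
  - by exists (x * y); [apply: inG_mul | apply: perm_of_mxM].
  - exists (reflR al be l m k * 1); first exact/inGmul/inG1.
    by apply: perm_of_mxP => y; rewrite mulr1 reflR_sigma.
case=> x Gx <-; apply/WB3P => y; apply: signed_root_inj.
by rewrite signed_root_flip -!(perm_of_inG Gx) signed_root_flip mulNmx.
Qed.
End SignedRootIsom.

Section B3.
Variable K : numClosedFieldType.

Definition B3_roots : 'M[K]_3 := mx3 1 0 0 0 0 1 1 (-2) (-1).
Definition B3_sigma (k : 'I_3) : {perm pt} :=
  match val k with 0 => nswap02 | 1 => neg2 | _ => swap12 end.

Lemma B3_roots_unit : B3_roots \in unitmx.
Proof.
have two_neq0 : (2 : K) != 0 by rewrite pnatr_eq0.
suff /mulmx1_unit[] : mx3 1 0 0 (1 / 2) (-1 / 2) (-1 / 2) 0 1 0 *m B3_roots = 1%:M by [].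
by rewrite [_ *m _]mx3_mul mx3_scalar; congr mx3; field.
Qed.

Lemma reflR_B3_sigma k x :
  signed_root B3_roots x *m reflR 2 1 (-1) (-2) k = signed_root B3_roots (B3_sigma k x).
Proof.
apply/rowP => j; rewrite !mxE !big_ord_recr big_ord0 /= !mxE /=.
case: (ord3_cases k) => ->; move: x; apply: pt_cases; rewrite /B3_sigma /= !permE /= !mxE /=;
  case: (ord3_cases j) => -> /=; ring.
Qed.

Lemma isom_WB3_B3 : isom_WB3 (inG (2 : K) 1 (-1) (-2)).
Proof.
apply: (isom_WB3_signed_roots B3_roots_unit reflR_B3_sigma) => H H1 HM H_sigma.
exact: (WB3_gen H1 HM (H_sigma 0) (H_sigma 1) (H_sigma 2)).
Qed.
End B3.

Section Swap23.
Variable K : numClosedFieldType.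

Definition swap23 : 'M[K]_3 := mx3 1 0 0 0 0 1 0 1 0.

Lemma swap23K : swap23 * swap23 = 1.
Proof. by rewrite mx3_mul mx3_one; congr mx3; ring. Qed.

Lemma swap23_conjM x y :
  swap23 * (x * y) * swap23 = swap23 * x * swap23 * (swap23 * y * swap23).
Proof. by rewrite !mulrA -(mulrA (swap23 * x) swap23) swap23K mulr1. Qed.

Lemma swap23_conjX x n : swap23 * x ^+ n * swap23 = (swap23 * x * swap23) ^+ n.
Proof.
elim: n => [|n IHn]; first by rewrite !expr0 mulr1 swap23K.
by rewrite !exprS swap23_conjM IHn.
Qed.

Lemma commr_swap23_conj x y :
  GRing.comm x y -> GRing.comm (swap23 * x * swap23) (swap23 * y * swap23).
Proof. by move=> cxy; rewrite /GRing.comm -!swap23_conjM cxy. Qed.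

Lemma swap23_s1 (al be l m : K) : swap23 * s1 al be l m * swap23 = s1 be al m l.
Proof. by rewrite !s1E !mx3_mul; congr mx3; ring. Qed.

Lemma swap23_s3 (al be l m : K) : swap23 * s3 al be l m * swap23 = s2 be al m l.
Proof. by rewrite s3E s2E !mx3_mul; congr mx3; ring. Qed.

Lemma swap23_s2 (al be l m : K) : swap23 * s2 al be l m * swap23 = s3 be al m l.
Proof. by rewrite s2E s3E !mx3_mul; congr mx3; ring. Qed.

Lemma swap23_half_turn (l m : K) : swap23 * half_turn l m * swap23 = half_turn m l.
Proof. by rewrite /half_turn !mx3_mul (mulrC m); congr mx3; ring. Qed.

Lemma inG_swap23 (al be l m : K) x :
  inG al be l m x -> inG be al m l (swap23 * x * swap23).
Proof.
elim=> [|i {}x _ IHx]; first by rewrite mulr1 swap23K; apply: inG1.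
rewrite swap23_conjM; case: (ord3_cases i) => ->.
- by rewrite -/(s1 al be l m) swap23_s1; apply: inGmul.
- by rewrite -/(s2 al be l m) swap23_s2; apply: inGmul.
- by rewrite -/(s3 al be l m) swap23_s3; apply: inGmul.
Qed.

Lemma isom_WB3_swap23 (al be l m : K) :
  isom_WB3 (inG be al m l) -> isom_WB3 (inG al be l m).
Proof.
have swap23_conjK x : swap23 * (swap23 * x * swap23) * swap23 = x.
  by rewrite !mulrA swap23K mul1r -mulrA swap23K mulr1.
case=> f [fM f_inj f_img]; exists (fun x => f (swap23 * x * swap23)); split.
- by move=> x y Gx Gy; rewrite swap23_conjM fM //; apply: inG_swap23.
- move=> x y Gx Gy /f_inj eq_xy; rewrite -[x]swap23_conjK -[y]swap23_conjK.
  by rewrite eq_xy //; apply: inG_swap23.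
move=> g; rewrite f_img; split=> [[x Gx <-] | [x Gx <-]].
  by exists (swap23 * x * swap23); rewrite ?swap23_conjK //; apply: inG_swap23.
by exists (swap23 * x * swap23) => //; apply: inG_swap23.
Qed.
End Swap23.

Lemma proposition11_s2 (K : numClosedFieldType) p q r (z1 z2 z3 l m : K) :
    (2 < p)%N -> (2 < r)%N -> p.-primitive_root z1 -> q.-primitive_root z2 ->
    r.-primitive_root z3 -> l * m = fourcos2 z3 ->
  let al := fourcos2 z1 in let be := fourcos2 z2 in let ga := fourcos2 z3 in
  let t := s1 al be l m * half_turn l m in
  GRing.comm (t ^+ 2) (s2 al be l m * t ^+ 2 * s2 al be l m) ->
  [\/ Delta al be ga l m = 0, al = 1 /\ Delta al be ga l m = 4 - ga
    | [/\ al = 2, be = 1, ga = 2, l = -1 /\ m = -2 & isom_WB3 (inG al be l m)]].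
Proof.
move=> p_gt2 r_gt2 pz1 pz2 pz3 lmE al be ga t comm_t.
have [_ z1_neqN1] := prim_root_neq1N1 p_gt2 pz1.
have [z3_neq1 _] := prim_root_neq1N1 r_gt2 pz3.
have d_neq0 : 4 - l * m != 0 by rewrite lmE four_sub_fourcos2_neq0 ?(prim_root_neq0 pz3).
have al_neq0 : al != 0 by rewrite fourcos2_neq0 ?(prim_root_neq0 pz1).
rewrite /ga -lmE.
case: (half_turn_comm_s2_cases d_neq0 al_neq0 comm_t) => [D0 | al1_D4 | [m2 al_l]].
- by constructor 1.
- by constructor 2.
have eq4 : al * (l * m) = 4 * be.
  apply/eqP; rewrite -subr_eq0 m2 (_ : _ - _ = - 2 * (al * l + 2 * be)); last by ring.
  by rewrite al_l mulr0.
rewrite lmE in eq4.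
have [z1_sq z3_sq] := fourcos2_mul_eq4_sqrN1 p_gt2 r_gt2 pz1 pz2 pz3 eq4.
have al2 : al = 2 := fourcos2_sqrN1 z1_sq.
have be1 : be = 1.
  have four_neq0 : (4 : K) != 0 by rewrite pnatr_eq0.
  by apply: (mulfI four_neq0); rewrite -eq4 -/al al2 (fourcos2_sqrN1 z3_sq) mulr1 -natrM.
have l1 : l = -1.
  by move/eqP: al_l; rewrite al2 be1 -mulrDr mulf_eq0 pnatr_eq0 addr_eq0 => /eqP.
constructor 3; split=> //; first by rewrite lmE; apply: fourcos2_sqrN1.
by rewrite al2 be1 l1 m2; apply: isom_WB3_B3.
Qed.

Unset Implicit Arguments.
Theorem proposition11 (K : numClosedFieldType) (p q r r1 : nat)
  (z1 z2 z3 l m : K) :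
  (3 <= p)%N -> (3 <= q)%N -> (3 <= r)%N ->
  p.-primitive_root z1 -> q.-primitive_root z2 -> r.-primitive_root z3 ->
  l * m = fourcos2 z3 ->
  r = (2 * r1)%N ->
  let al := fourcos2 z1 in
  let be := fourcos2 z2 in
  let ga := fourcos2 z3 in
  let S1 := s1 al be l m in
  let S2 := s2 al be l m in
  let S3 := s3 al be l m in
  let t := S1 * (S2 * S3) ^+ r1 in
  let D := Delta al be ga l m in
  ((t ^+ 2 * (S2 * t ^+ 2 * S2) = (S2 * t ^+ 2 * S2) * t ^+ 2) ->
     [\/ D = 0,
         al = 1 /\ D = 4 - ga
       | [/\ al = 2, be = 1, ga = 2, (l = -1 /\ m = -2) &
             isom_WB3 (inG al be l m)]])
  /\
  ((t ^+ 2 * (S3 * t ^+ 2 * S3) = (S3 * t ^+ 2 * S3) * t ^+ 2) ->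
     [\/ D = 0,
         be = 1 /\ D = 4 - ga
       | [/\ al = 1, be = 2, ga = 2, (l = -2 /\ m = -1) &
             isom_WB3 (inG al be l m)]]).
Proof.
move=> p_gt2 q_gt2 r_gt2 pz1 pz2 pz3 lmE r_eq al be ga S1 S2 S3 t D.
have r1_gt1 : (1 < r1)%N by lia.
have tE : t = s1 al be l m * half_turn l m.
  by rewrite /t /S1 /S2 /S3 (s2s3_expr_half _ _ _ r1_gt1 lmE) // -r_eq.
split=> [comm2 | /commr_swap23_conj].
  by rewrite /S2 tE in comm2; apply: (proposition11_s2 p_gt2 r_gt2 pz1 pz2 pz3 lmE comm2).
rewrite tE /S3 !swap23_conjM !swap23_s1 !swap23_half_turn !swap23_s3.
move=> /(proposition11_s2 q_gt2 r_gt2 pz2 pz1 pz3 (etrans (mulrC m l) lmE)).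
have -> : Delta be al ga m l = D by rewrite /D /Delta; ring.
case=> [D0 | be1_D4 | [be2 al1 ga2 [m1 l2] iso]]; [by constructor 1 | by constructor 2 |].
by constructor 3; split=> //; apply: isom_WB3_swap23.
Qed.
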